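(* Let $A\in\mathcal{PM}(n)$ have row vectors $r_0,\ldots,r_{n-1}$. A poset vector $v$ of $A$ is join-irreducible if and only if $v=r_i$ for some $i\in X_n$.
   Context: Let $X_n=\{0,1,\ldots,n-1\}$. A naturally labeled (NL) poset on $X_n$ is a partial order $\preceq$ on $X_n$ such that $x\preceq y$ implies $x\le y$ in the usual integer order. Its poset matrix is the $n\times n$ $(0,1)$-matrix $A=(a_{i,j})_{i,j\in X_n}$ with $a_{i,j}=1$ if $j\preceq i$ and $0$ otherwise; $\mathcal{PM}(n)$ is the set of all such matrices. Arithmetic is Boolean ($1+1=1$, vector sum entrywise). For $v\in\{0,1\}^n$, $A^v=\begin{bmatrix}A&\mathbf{0}\\ v&1\end{bmatrix}$, and $v$ is a poset vector of $A$ if $A^v\in\mathcal{PM}(n+1)$. A poset vector $v$ is join-irreducible if $v\neq\mathbf 0$ and, whenever $v=u+w$ with $u,w$ poset vectors of $A$, one has $v=u$ or $v=w$. *)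

From mathcomp Require Import all_boot.
Set Implicit Arguments. Unset Strict Implicit. Unset Printing Implicit Defensive.

(* (0,1)-matrices on X_n = 'I_n, entries as booleans; A i j = a_{i,j}. *)
Definition bmat (n : nat) := 'I_n -> 'I_n -> bool.
Definition bvec (n : nat) := 'I_n -> bool.

(* A is a poset matrix: the relation  j <=_A i  :<->  A i j  is a partial order
   on X_n which is a natural labeling (j <=_A i implies j <= i). *)
Definition is_poset_matrix (n : nat) (A : bmat n) : Prop :=
  [/\ (forall i, A i i),
      (forall i j, A i j -> A j i -> i = j),
      (forall i j k, A i j -> A j k -> A i k)
    & (forall i j, A i j -> (j <= i)%N)].

(* A^v = [[A, 0], [v, 1]] as an (n+1)x(n+1) matrix; index n is the new last row/col. *)
Definition ext_mat (n : nat) (A : bmat n) (v : bvec n) : bmat n.+1 :=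
  fun i j =>
    match unlift ord_max i, unlift ord_max j with
    | Some i', Some j' => A i' j'
    | Some _, None => false
    | None, Some j' => v j'
    | None, None => true
    end.

Definition poset_vector (n : nat) (A : bmat n) (v : bvec n) : Prop :=
  is_poset_matrix (ext_mat A v).

Definition bvadd (n : nat) (u w : bvec n) : bvec n := fun j => u j || w j.
Definition bvzero (n : nat) : bvec n := fun _ => false.

Definition join_irreducible (n : nat) (A : bmat n) (v : bvec n) : Prop :=
  v <> @bvzero n /\
  forall u w : bvec n, poset_vector A u -> poset_vector A w ->
    v = bvadd u w -> v = u \/ v = w.

Definition row_vec (n : nat) (A : bmat n) (i : 'I_n) : bvec n := fun j => A i j.

(* Poset vectors of A are exactly the down-sets of the poset, and the rows of A
   are its principal down-sets. A union u + w of down-sets equal to the row of i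
   contains i, say in u, and then u is the whole row. Conversely, if i is the
   largest label in a nonzero down-set v, natural labeling makes i maximal in v,
   so v minus i is still a down-set and v = r_i + (v minus i) forces v = r_i. *)

From mathcomp Require Import all_boot.
From Stdlib Require Import FunctionalExtensionality.
Set Implicit Arguments. Unset Strict Implicit.

Section PosetVectors.

Variables (n : nat) (A : bmat n).
Hypothesis PA : is_poset_matrix A.

Definition down_closed (v : bvec n) : Prop := forall j k, v j -> A j k -> v k.

Definition bvremove (v : bvec n) (i : 'I_n) : bvec n := fun j => v j && (j != i).

Lemma ext_mat_lift (v : bvec n) i j :
  ext_mat A v (lift ord_max i) (lift ord_max j) = A i j.
Proof. by rewrite /ext_mat !liftK. Qed.

Lemma ext_mat_max_lift (v : bvec n) j : ext_mat A v ord_max (lift ord_max j) = v j.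
Proof. by rewrite /ext_mat liftK unlift_none. Qed.

Lemma poset_vector_down_closed v : poset_vector A v -> down_closed v.
Proof.
case=> _ _ trans _ j k vj Ajk.
have := trans ord_max (lift ord_max j) (lift ord_max k).
by rewrite !ext_mat_max_lift ext_mat_lift; apply.
Qed.

Lemma down_closed_poset_vector v : down_closed v -> poset_vector A v.
Proof.
case: PA => refl anti trans label vD; split.
- by move=> i; rewrite /ext_mat; case: (unlift _ i).
- move=> i j; rewrite /ext_mat.
  case: unliftP => [i' ->|<-]; case: unliftP => [j' ->|<-] //.
  by move=> Aij Aji; rewrite (anti _ _ Aij Aji).
- move=> i j k; rewrite /ext_mat.
  case: unliftP => [i' _|_]; case: unliftP => [j' _|_] //;
    case: unliftP => [k' _|_] //; eauto.
- move=> i j; rewrite /ext_mat.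
  case: unliftP => [i' ->|->]; case: unliftP => [j' ->|->] //=;
    rewrite /bump !(leqNgt n) !ltn_ord !add0n.
  + exact: label.
  + by move=> _; apply: ltnW.
Qed.

Lemma row_vec_down_closed i : down_closed (row_vec A i).
Proof. by case: PA => _ _ trans _ j k; apply: trans. Qed.

Lemma row_vec_join_irreducible i : join_irreducible A (row_vec A i).
Proof.
case: (PA) => refl _ _ _; split.
  by move/(congr1 (fun f => f i)); rewrite /row_vec /bvzero refl.
move=> u w /poset_vector_down_closed uD /poset_vector_down_closed wD e.
have Ai j : A i j = u j || w j by rewrite [LHS](congr1 (fun f => f j) e).
have : u i || w i by rewrite -Ai refl.
case/orP=> [ui|wi]; [left|right]; apply: functional_extensionality => j;
  apply/idP/idP; rewrite /row_vec Ai.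
- by move/orP=> [//|wj]; apply: uD ui _; rewrite Ai wj orbT.
- by move->.
- by move/orP=> [uj|//]; apply: wD wi _; rewrite Ai uj.
- by move->; rewrite orbT.
Qed.

Lemma bvremove_max_down_closed v (i : 'I_n) :
  down_closed v -> (forall j, v j -> (j <= i)%N) -> down_closed (bvremove v i).
Proof.
case: PA => _ _ _ label vD vmax j k /andP[vj nji] Ajk.
rewrite /bvremove (vD _ _ vj Ajk) /=; apply: contraNneq nji => eki.
by rewrite -val_eqE eqn_leq vmax //= -eki label.
Qed.

Lemma down_closed_split v i :
  down_closed v -> v i -> v = bvadd (row_vec A i) (bvremove v i).
Proof.
case: PA => refl _ _ _ vD vi; apply: functional_extensionality => j.
rewrite /bvadd /bvremove /row_vec.
have [->|nji] := eqVneq j i; first by rewrite vi refl.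
rewrite andbT; case vj: (v j); rewrite ?orbT ?orbF //.
by apply/esym/negbTE; apply: contraFN vj; apply: vD vi.
Qed.

End PosetVectors.

Lemma exists_max_support n (v : bvec n) :
  v <> @bvzero n -> exists2 i, v i & forall j, v j -> (j <= i)%N.
Proof.
case: (pickP v) => [j0 vj0 _|none []]; last first.
  by apply: functional_extensionality => j; rewrite none.
by exists [arg max_(i > j0 | v i) (i : nat)]; case: arg_maxnP.
Qed.

Theorem theorem5p5 (n : nat) (A : bmat n) (v : bvec n) :
  is_poset_matrix A -> poset_vector A v ->
  (join_irreducible A v <-> exists i : 'I_n, v = row_vec A i).
Proof.
move=> PA /poset_vector_down_closed vD; split; last first.
  by case=> i ->; apply: row_vec_join_irreducible.
case=> /exists_max_support [i vi vmax] join_irr.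
have rowP : poset_vector A (row_vec A i).
  by apply: down_closed_poset_vector => //; apply: row_vec_down_closed.
have remP : poset_vector A (bvremove v i).
  by apply: down_closed_poset_vector => //; apply: bvremove_max_down_closed.
case: (join_irr _ _ rowP remP (down_closed_split PA vD vi)) => [->|e].
  by exists i.
by move: vi; rewrite e /bvremove eqxx andbF.
Qed.
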